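(* Let $A=(a_{i,j})_{i,j\in\mathbf N}\in\mathcal A$. Suppose there exist positive constants $C$ and $c$ such that (i) $a_{i,j}=0$ whenever $i>Cj^c$, and (ii) $|a_{i,j}|\le Cj^c$ for all $i,j$. Then $A\in\mathcal{DR}$. Furthermore, the set of all elements of $\mathcal A$ satisfying these conditions (with constants depending on the matrix) is a subring of $\mathcal{DR}$.
   Context: $\mathbf N=\{1,2,\dots\}$. $\mathcal A$ is the ring of matrices $(a_{i,j})_{i,j\in\mathbf N}$ with complex entries and finitely many nonzero entries in each column. $\mathcal A$ acts on the right on the space $\mathbf C^{\mathbf N}$ of complex sequences by $(fA)(n)=\sum_m a_{m,n}f(m)$. $\mathcal{DS}\subseteq\mathbf C^{\mathbf N}$ is the subspace of sequences $f$ for which there exist positive constants $C,c$ with $|f(n)|\le Cn^c$ for all $n$. $\mathcal{DR}$ is the subalgebra of $\mathcal A$ consisting of all $A$ with $\mathcal{DS}\,A\subseteq\mathcal{DS}$. *)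

From Stdlib Require Import Reals List ClassicalEpsilon.
From Coquelicot Require Import Coquelicot.
Open Scope R_scope.

(* Index convention: N = {1,2,...} is represented by nat via the shift
   k : nat  <->  k+1 : N.  A matrix (a_{i,j})_{i,j in N} is a function
   A : nat -> nat -> C with  A i j = a_{i+1,j+1},  and a sequence
   f : N -> C is  f : nat -> C  with  f n = f(n+1). *)

Definition Mat := nat -> nat -> C.
Definition Seq := nat -> C.

Definition idx (k : nat) : R := INR (S k).

Definition csum (g : nat -> C) (M : nat) : C :=
  fold_right Cplus (RtoC 0) (map g (seq 0 M)).

Definition in_A (A : Mat) : Prop :=
  forall j : nat, exists M : nat, forall i : nat, (M <= i)%nat -> A i j = RtoC 0.

(* a chosen bound for column j (meaningful when A is in \mathcal A) *)
Definition colbd (A : Mat) (j : nat) : nat :=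
  epsilon (inhabits 0%nat)
    (fun M : nat => forall i : nat, (M <= i)%nat -> A i j = RtoC 0).

Definition act (f : Seq) (A : Mat) : Seq :=
  fun n => csum (fun m => Cmult (A m n) (f m)) (colbd A n).

Definition mat0 : Mat := fun _ _ => RtoC 0.
Definition mat1 : Mat := fun i j => if Nat.eqb i j then RtoC 1 else RtoC 0.
Definition matadd (A B : Mat) : Mat := fun i j => Cplus (A i j) (B i j).
Definition matopp (A : Mat) : Mat := fun i j => Copp (A i j).
Definition matmul (A B : Mat) : Mat :=
  fun i j => csum (fun k => Cmult (A i k) (B k j)) (colbd B j).

Definition DS (f : Seq) : Prop :=
  exists C0 c : R, 0 < C0 /\ 0 < c /\
    forall n : nat, Cmod (f n) <= C0 * Rpower (idx n) c.

Definition DR (A : Mat) : Prop :=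
  in_A A /\ forall f : Seq, DS f -> DS (act f A).

Definition poly_bounded (A : Mat) : Prop :=
  exists C0 c : R, 0 < C0 /\ 0 < c /\
    (forall i j : nat, idx i > C0 * Rpower (idx j) c -> A i j = RtoC 0) /\
    (forall i j : nat, Cmod (A i j) <= C0 * Rpower (idx j) c).

Definition S_good (A : Mat) : Prop := in_A A /\ poly_bounded A.

(* A column of a polynomially bounded matrix has its support in an initial
   segment of polynomial length and polynomially bounded entries, so a
   column sum of the form (fA)(n) or (AB)_{i,j} has polynomially many terms,
   each polynomially bounded: composing the bounds x <= C j^c and
   |g x| <= C' x^c' gives |g x| <= C' C^c' j^(c c'). *)

From Stdlib Require Import Reals List Classical Lra ZArith Lia.
From Coquelicot Require Import Coquelicot.
Open Scope R_scope.

Definition growth (C c : R) (n : nat) : R := C * Rpower (idx n) c.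

(* [poly_bounded A] unfolds to [exists C c, 0 < C /\ 0 < c /\ poly_bounded_by C c A]. *)
Definition poly_bounded_by (C c : R) (A : Mat) : Prop :=
  (forall i j : nat, idx i > growth C c j -> A i j = RtoC 0) /\
  (forall i j : nat, Cmod (A i j) <= growth C c j).

Lemma idx_ge1 n : 1 <= idx n.
Proof. unfold idx; rewrite S_INR; pose proof (pos_INR n); lra. Qed.

Lemma idx_gt0 n : 0 < idx n.
Proof. pose proof (idx_ge1 n); lra. Qed.

Lemma Rpower_gt0 x y : 0 < Rpower x y.
Proof. apply exp_pos. Qed.

Lemma growth_gt0 C c n : 0 < C -> 0 < growth C c n.
Proof. intros; unfold growth; pose proof (Rpower_gt0 (idx n) c); nra. Qed.

Lemma growth_le C1 c1 C2 c2 n : 0 <= C1 <= C2 -> c1 <= c2 ->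
  growth C1 c1 n <= growth C2 c2 n.
Proof.
  intros; unfold growth; apply Rmult_le_compat; try lra.
  - left; apply Rpower_gt0.
  - apply Rle_Rpower; [apply idx_ge1 | lra].
Qed.

Lemma growth_mul C1 c1 C2 c2 n :
  growth C1 c1 n * growth C2 c2 n = growth (C1 * C2) (c1 + c2) n.
Proof. unfold growth; rewrite Rpower_plus; ring. Qed.

Lemma growth_comp C1 c1 C2 c2 k j : 0 < C1 -> 0 <= C2 -> 0 <= c2 ->
  idx k <= growth C1 c1 j ->
  growth C2 c2 k <= growth (C2 * Rpower C1 c2) (c1 * c2) j.
Proof.
  intros HC1 HC2 Hc2 Hk.
  apply Rle_trans with (C2 * Rpower (growth C1 c1 j) c2).
  - apply Rmult_le_compat_l; [lra|].
    apply Rle_Rpower_l; [lra | split; [apply idx_gt0 | exact Hk]].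
  - right; unfold growth.
    rewrite <- Rpower_mult_distr, Rpower_mult;
      [ring | exact HC1 | apply Rpower_gt0].
Qed.

Lemma csum_S g M : csum g (S M) = Cplus (csum g M) (g M).
Proof.
  unfold csum; rewrite seq_S, map_app, fold_right_app; simpl.
  rewrite Cplus_0_r.
  generalize (map g (seq 0 M)); intros l.
  induction l as [|x l IH]; simpl; [now rewrite Cplus_0_l|].
  now rewrite IH, Cplus_assoc.
Qed.

Lemma csum_eq0 g M : (forall m, g m = RtoC 0) -> csum g M = RtoC 0.
Proof.
  intros Hg; induction M as [|M IH]; [reflexivity|].
  now rewrite csum_S, IH, Hg, Cplus_0_r.
Qed.

Lemma csum_bound g M X Y : 0 <= X -> 0 <= Y ->
  (forall m, g m <> RtoC 0 -> idx m <= X) ->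
  (forall m, idx m <= X -> Cmod (g m) <= Y) ->
  Cmod (csum g M) <= X * Y.
Proof.
  intros HX HY Hsupp Hg.
  (* at most min(M, X) of the terms g 0, ..., g (M-1) are nonzero *)
  assert (Hmin : Cmod (csum g M) <= Y * Rmin (INR M) X).
  { induction M as [|M IH].
    - unfold csum; simpl; rewrite Cmod_0.
      unfold Rmin; destruct Rle_dec; nra.
    - rewrite csum_S; eapply Rle_trans; [apply Cmod_triangle|].
      rewrite S_INR; unfold Rmin in *.
      destruct (classic (g M = RtoC 0)) as [E|E].
      + rewrite E, Cmod_0.
        destruct (Rle_dec (INR M) X), (Rle_dec (INR M + 1) X); nra.
      + pose proof (Hsupp _ E) as HM; pose proof (Hg _ HM).
        unfold idx in HM; rewrite S_INR in HM.
        destruct (Rle_dec (INR M) X), (Rle_dec (INR M + 1) X); nra. }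
  pose proof (Rmin_r (INR M) X); nra.
Qed.

Lemma poly_bounded_by_mono C1 c1 C2 c2 A : 0 <= C1 <= C2 -> c1 <= c2 ->
  poly_bounded_by C1 c1 A -> poly_bounded_by C2 c2 A.
Proof.
  intros HC Hc [Hz Hb].
  pose proof (fun j => growth_le C1 c1 C2 c2 j HC Hc) as Hgrowth.
  split; intros i j; specialize (Hgrowth j).
  - intros Hij; apply Hz; lra.
  - eapply Rle_trans; [apply Hb | exact Hgrowth].
Qed.

Lemma poly_bounded_in_A A : poly_bounded A -> in_A A.
Proof.
  intros (C & c & HC & _ & Hz & _) j.
  pose proof (growth_gt0 C c j HC) as HX0.
  set (X := growth C c j) in *.
  destruct (archimed X) as [HX _].
  assert (Hup : (0 < up X)%Z) by (apply lt_IZR; lra).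
  exists (Z.to_nat (up X)); intros i Hi; apply Hz; change (idx i > X).
  apply le_INR in Hi; rewrite INR_IZR_INZ, Z2Nat.id in Hi by lia.
  unfold idx; rewrite S_INR; lra.
Qed.

Lemma poly_bounded_S_good A : poly_bounded A -> S_good A.
Proof. intros H; split; [apply poly_bounded_in_A|]; exact H. Qed.

Lemma poly_bounded_DR A : poly_bounded A -> DR A.
Proof.
  intros HA; split; [now apply poly_bounded_in_A|].
  destruct HA as (Ca & ca & HCa & Hca & Hz & Hb).
  intros f (Cf & cf & HCf & Hcf & Hf).
  exists (Ca * (Ca * (Cf * Rpower Ca cf))), (ca + (ca + ca * cf)).
  split; [pose proof (Rpower_gt0 Ca cf); repeat apply Rmult_lt_0_compat; lra|].
  split; [nra|].
  intros n; unfold act.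
  change (Cmod (csum (fun m => Cmult (A m n) (f m)) (colbd A n))
          <= growth (Ca * (Ca * (Cf * Rpower Ca cf))) (ca + (ca + ca * cf)) n).
  rewrite <- !growth_mul.
  pose proof (growth_gt0 _ ca n HCa).
  pose proof (growth_gt0 (Cf * Rpower Ca cf) (ca * cf) n
                (Rmult_lt_0_compat _ _ HCf (Rpower_gt0 Ca cf))).
  apply csum_bound; try nra.
  - intros m Hm; apply Rnot_gt_le; intros Hgt; apply Hm.
    now rewrite (Hz m n Hgt), Cmult_0_l.
  - intros m Hm; rewrite Cmod_mult.
    apply Rmult_le_compat; try apply Cmod_ge_0; [apply Hb|].
    eapply Rle_trans; [apply Hf|].
    apply growth_comp; lra.
Qed.

Lemma poly_bounded_mat0 : poly_bounded mat0.
Proof.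
  exists 1, 1; split; [lra|]; split; [lra|]; split; [reflexivity|].
  intros i j; unfold mat0; rewrite Cmod_0; left; apply growth_gt0; lra.
Qed.

Lemma poly_bounded_mat1 : poly_bounded mat1.
Proof.
  exists 1, 1; split; [lra|]; split; [lra|].
  assert (Hj : forall j, 1 * Rpower (idx j) 1 = idx j)
    by (intros j; rewrite Rpower_1 by apply idx_gt0; ring).
  split; intros i j; rewrite Hj; unfold mat1;
    destruct (Nat.eqb_spec i j) as [<-|]; try lra; try reflexivity.
  - rewrite Cmod_1; apply idx_ge1.
  - rewrite Cmod_0; left; apply idx_gt0.
Qed.

Lemma poly_bounded_opp A : poly_bounded A -> poly_bounded (matopp A).
Proof.
  intros (C & c & HC & Hc & Hz & Hb); exists C, c.
  do 2 (split; [assumption|]); unfold matopp; split; intros i j.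
  - intros Hij; rewrite (Hz i j Hij); apply injective_projections; simpl; lra.
  - rewrite Cmod_opp; apply Hb.
Qed.

Lemma poly_bounded_add A B :
  poly_bounded A -> poly_bounded B -> poly_bounded (matadd A B).
Proof.
  intros (C1 & c1 & HC1 & Hc1 & HA) (C2 & c2 & HC2 & Hc2 & HB).
  set (C := C1 + C2); set (c := c1 + c2).
  destruct (poly_bounded_by_mono C1 c1 C c A) as [HzA HbA];
    [unfold C; lra | unfold c; lra | exact HA |].
  destruct (poly_bounded_by_mono C2 c2 C c B) as [HzB HbB];
    [unfold C; lra | unfold c; lra | exact HB |].
  exists (2 * C), c; split; [unfold C; lra|]; split; [unfold c; lra|].
  unfold matadd; split; intros i j.
  - intros Hij.
    assert (growth C c j <= growth (2 * C) c j) by (apply growth_le; unfold C; lra).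
    unfold growth in *; rewrite HzA, HzB by lra; apply Cplus_0_l.
  - eapply Rle_trans; [apply Cmod_triangle|].
    pose proof (HbA i j); pose proof (HbB i j).
    unfold growth in *; lra.
Qed.

Lemma poly_bounded_mul A B :
  poly_bounded A -> poly_bounded B -> poly_bounded (matmul A B).
Proof.
  intros (CA & cA & HCA & HcA & HzA & HbA) (CB & cB & HCB & HcB & HzB & HbB).
  set (K := CA * Rpower CB cA).
  assert (HK : 0 < K) by (apply Rmult_lt_0_compat; [lra | apply Rpower_gt0]).
  (* for k in the support of column j of B, column k of A is bounded, and
     supported, below K j^(cB cA) *)
  assert (HAk : forall k j, idx k <= growth CB cB j ->
                  growth CA cA k <= growth K (cB * cA) j)
    by (intros; apply growth_comp; lra).
  exists (K * (1 + CB * CB)), (cB * cA + cB + cB).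
  split; [nra|]; split; [nra|].
  unfold matmul; split; intros i j.
  - intros Hij; apply csum_eq0; intros k.
    destruct (Rle_dec (idx k) (growth CB cB j)) as [Hk|Hk].
    + rewrite HzA, Cmult_0_l; [reflexivity|].
      eapply Rle_lt_trans; [|exact Hij].
      eapply Rle_trans; [apply HAk, Hk|].
      apply growth_le; nra.
    + rewrite HzB, Cmult_0_r; [reflexivity | now apply Rnot_le_gt].
  - pose proof (growth_gt0 CB cB j HCB).
    pose proof (growth_gt0 K (cB * cA) j HK).
    apply Rle_trans with
      (growth CB cB j * (growth K (cB * cA) j * growth CB cB j)).
    + apply csum_bound; try nra.
      * intros k Hk; apply Rnot_gt_le; intros Hgt; apply Hk.
        now rewrite (HzB k j Hgt), Cmult_0_r.
      * intros k Hk; rewrite Cmod_mult.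
        apply Rmult_le_compat; try apply Cmod_ge_0; [|apply HbB].
        eapply Rle_trans; [apply HbA | apply HAk, Hk].
    + rewrite !growth_mul; apply growth_le; [split|]; nra.
Qed.

Theorem lemma2p1 :
  (forall A : Mat, in_A A -> poly_bounded A -> DR A) /\
  ((forall A : Mat, S_good A -> DR A) /\
   S_good mat0 /\ S_good mat1 /\
   (forall A B : Mat, S_good A -> S_good B -> S_good (matadd A B)) /\
   (forall A : Mat, S_good A -> S_good (matopp A)) /\
   (forall A B : Mat, S_good A -> S_good B -> S_good (matmul A B))).
Proof.
  split; [intros A _; apply poly_bounded_DR|].
  split; [intros A [_ HA]; now apply poly_bounded_DR|].
  split; [apply poly_bounded_S_good, poly_bounded_mat0|].
  split; [apply poly_bounded_S_good, poly_bounded_mat1|].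
  split; [intros A B [_ HA] [_ HB]; now apply poly_bounded_S_good, poly_bounded_add|].
  split; [intros A [_ HA]; now apply poly_bounded_S_good, poly_bounded_opp|].
  intros A B [_ HA] [_ HB]; now apply poly_bounded_S_good, poly_bounded_mul.
Qed.
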